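(* Let $\mathbf{A}\in\mathbb{R}^{n\times n}$ be a symmetric positive semidefinite matrix, let $\mathbf{s}_0\in[-1,1]^n$ and let $k>0$ be an integer. Consider the problem of maximizing $\mathbf{s}^{\intercal}\mathbf{A}\mathbf{s}$ subject to $\mathbf{s}\in[-1,1]^n$ and $\|\mathbf{s}-\mathbf{s}_0\|_0\le k$. Then there exists an optimal solution $\mathbf{s}$ such that $\mathbf{s}(i)\in\{-1,1\}$ for all entries $i$ with $\mathbf{s}(i)\neq\mathbf{s}_0(i)$. In particular, if $\mathbf{s}_0\in\{-1,1\}^n$ or $k=n$, there exists an optimal solution $\mathbf{s}\in\{-1,1\}^n$.
   Context: $\|\cdot\|_0$ counts nonzero entries; $\mathbf{s}(i)$ is the $i$-th entry of $\mathbf{s}$. *)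

From HB Require Import structures.
From mathcomp Require Import all_boot all_order all_algebra.
From mathcomp Require Import reals.
Set Implicit Arguments. Unset Strict Implicit. Unset Printing Implicit Defensive.
Import Order.TTheory GRing.Theory Num.Theory.
Local Open Scope ring_scope.

Definition quad (R : realType) (n : nat) (A : 'M[R]_n) (s : 'cV[R]_n) : R :=
  (s^T *m A *m s) 0 0.

Definition psd (R : realType) (n : nat) (A : 'M[R]_n) : Prop :=
  A^T = A /\ forall x : 'cV[R]_n, 0 <= quad A x.

Definition in_box (R : realType) (n : nat) (s : 'cV[R]_n) : Prop :=
  forall i : 'I_n, -1 <= s i 0 <= 1.

Definition is_sign (R : realType) (n : nat) (s : 'cV[R]_n) : Prop :=
  forall i : 'I_n, s i 0 = 1 \/ s i 0 = -1.

Definition l0dist (R : realType) (n : nat) (s s0 : 'cV[R]_n) : nat :=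
  #|[set i : 'I_n | (s - s0) i 0 != 0]|.

Definition feasible (R : realType) (n : nat) (s0 : 'cV[R]_n) (k : nat)
  (s : 'cV[R]_n) : Prop :=
  in_box s /\ (l0dist s s0 <= k)%N.

Definition optimal (R : realType) (n : nat) (A : 'M[R]_n) (s0 : 'cV[R]_n)
  (k : nat) (s : 'cV[R]_n) : Prop :=
  feasible s0 k s /\ forall t : 'cV[R]_n, feasible s0 k t -> quad A t <= quad A s.

From HB Require Import structures.
From mathcomp Require Import all_boot all_order all_algebra.
From mathcomp Require Import reals.
From mathcomp Require Import ring lra.
Import Order.TTheory GRing.Theory Num.Theory.
Local Open Scope ring_scope.

(* Along a coordinate direction e_i the form x |-> x^T A x is a quadratic
   polynomial with leading coefficient A_ii >= 0, hence convex, so on [-1, 1]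
   it is maximised at -1 or 1.  Rounding, one at a time, the coordinates where
   a feasible point t differs from s0 to +-1 never decreases the objective and
   never enlarges the support of t - s0.  Every feasible point is thus dominated
   by one of the finitely many feasible vectors whose entries are either those
   of s0 or +-1, and the best of these is an optimal solution of the required
   shape.  When k = n, rounding all coordinates of that optimum keeps it
   feasible and optimal. *)

Lemma quadratic_le_sign {R : realFieldType} (c b : R) {a x : R} :
  0 <= a -> -1 <= x <= 1 ->
  exists2 y, y = 1 \/ y = -1 & c + b * x + a * x ^+ 2 <= c + b * y + a * y ^+ 2.
Proof.
move=> a_ge0 /andP[x_ge x_le].
have a_conv : 0 <= a * ((1 - x) * (1 + x)) by rewrite !mulr_ge0 //; lra.
have [b_ge0 | b_lt0] := lerP 0 b.
- exists 1; first by left.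
  have : 0 <= b * (1 - x) by rewrite mulr_ge0 //; lra.
  rewrite expr1n expr2; lra.
- exists (-1); first by right.
  have : 0 <= - b * (1 + x) by rewrite mulr_ge0 //; lra.
  rewrite sqrrN expr1n expr2; lra.
Qed.

Section CoordinateRounding.
Context {R : realType} {n : nat} {A : 'M[R]_n}.

Lemma quadDZ (u e : 'cV[R]_n) (x : R) :
  quad A (u + x *: e) =
  quad A u + (u^T *m A *m e + e^T *m A *m u) 0 0 * x + quad A e * x ^+ 2.
Proof.
by rewrite /quad !linearD /= !linearZ /= !mulmxDl -!scalemxAl !mxE; ring.
Qed.

Lemma quad_delta (i : 'I_n) : quad A (delta_mx i 0) = A i i.
Proof. by rewrite /quad trmx_delta -rowE -colE !mxE. Qed.

Definition set_coord (v : 'cV[R]_n) (i : 'I_n) (y : R) : 'cV[R]_n :=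
  \col_j (if j == i then y else v j 0).

Lemma set_coordE (v : 'cV[R]_n) (i : 'I_n) (y : R) :
  set_coord v i y = set_coord v i 0 + y *: delta_mx i 0.
Proof.
apply/matrixP => j k; rewrite (ord1 k) !mxE /=.
by case: (j == i); rewrite /= ?mulr1 ?mulr0 ?add0r ?addr0.
Qed.

Lemma set_coord_id (v : 'cV[R]_n) (i : 'I_n) : set_coord v i (v i 0) = v.
Proof. by apply/matrixP => j k; rewrite (ord1 k) !mxE; case: (j =P i) => [->|]. Qed.

Hypothesis diag_ge0 : forall i, 0 <= A i i.

Lemma quad_set_coord_sign {v : 'cV[R]_n} {i : 'I_n} : -1 <= v i 0 <= 1 ->
  exists2 y, y = 1 \/ y = -1 & quad A v <= quad A (set_coord v i y).
Proof.
move=> v_i_box; set u := set_coord v i 0; set e : 'cV[R]_n := delta_mx i 0.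
have expand y : quad A (set_coord v i y)
    = quad A u + (u^T *m A *m e + e^T *m A *m u) 0 0 * y + A i i * y ^+ 2.
  by rewrite set_coordE quadDZ quad_delta.
have [y y_sign le_y] := quadratic_le_sign (quad A u)
  ((u^T *m A *m e + e^T *m A *m u) 0 0) (diag_ge0 i) v_i_box.
by exists y; rewrite // -{1}(set_coord_id v i) (expand (v i 0)) (expand y).
Qed.

Lemma round_coords (S : seq 'I_n) {t : 'cV[R]_n} : in_box t -> exists v,
  [/\ in_box v, quad A t <= quad A v,
      forall i, i \in S -> v i 0 = 1 \/ v i 0 = -1
    & forall i, i \notin S -> v i 0 = t i 0].
Proof.
move=> t_box; elim: S => [|i S [v [v_box le_tv v_S v_notS]]]; first by exists t.
have [y y_sign le_vy] := quad_set_coord_sign (v_box i).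
exists (set_coord v i y); split.
- move=> j; rewrite mxE; case: (j == i); last exact: v_box.
  by case: y_sign => ->; lra.
- exact: le_trans le_vy.
- by move=> j; rewrite in_cons mxE; case: (j == i) => //= /v_S.
- by move=> j; rewrite in_cons negb_or mxE => /andP[/negbTE -> /v_notS].
Qed.

End CoordinateRounding.

Section SignPatterns.
Context {R : realType} {n : nat}.
Implicit Types (t v : 'cV[R]_n).

Definition moved_to_sign (s0 : 'cV[R]_n) v :=
  forall i, v i 0 != s0 i 0 -> v i 0 = 1 \/ v i 0 = -1.

Definition sign_pattern (s0 : 'cV[R]_n) (g : {ffun 'I_n -> option bool}) : 'cV[R]_n :=
  \col_i (if g i is Some b then (if b then 1 else -1) else s0 i 0).

Lemma sign_pattern_box (s0 : 'cV[R]_n) g : in_box s0 -> in_box (sign_pattern s0 g).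
Proof.
move=> s0_box i; rewrite mxE.
by case: (g i) => [[]|]; rewrite ?s0_box //=; lra.
Qed.

Lemma sign_pattern_moved (s0 : 'cV[R]_n) g : moved_to_sign s0 (sign_pattern s0 g).
Proof.
by move=> i; rewrite mxE; case: (g i) => [[]|]; [left|right|rewrite eqxx].
Qed.

Lemma moved_to_sign_pattern {s0 v : 'cV[R]_n} :
  moved_to_sign s0 v -> exists g, v = sign_pattern s0 g.
Proof.
move=> v_moved.
exists [ffun i => if v i 0 == s0 i 0 then None else Some (v i 0 == 1)].
apply/matrixP => i j; rewrite (ord1 j) !mxE ffunE.
have [-> // | /v_moved v_sign] := eqVneq.
have minus1_neq1 : (-1 == 1 :> R) = false by apply/eqP; lra.
by case: v_sign => ->; rewrite ?eqxx ?minus1_neq1.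
Qed.

Lemma l0dist_id (s0 : 'cV[R]_n) : l0dist s0 s0 = 0%N.
Proof.
rewrite /l0dist (_ : [set i | _] = set0) ?cards0 //.
by apply/setP => i; rewrite !inE subrr mxE eqxx.
Qed.

Lemma l0dist_le_dim v (s0 : 'cV[R]_n) : (l0dist v s0 <= n)%N.
Proof. by rewrite /l0dist; apply: leq_trans (max_card _) _; rewrite card_ord. Qed.

Lemma l0dist_subset (s0 : 'cV[R]_n) v t :
  (forall i, v i 0 != s0 i 0 -> t i 0 != s0 i 0) ->
  (l0dist v s0 <= l0dist t s0)%N.
Proof.
move=> supp_vt; apply: subset_leq_card; apply/subsetP => i.
by rewrite !inE !mxE !subr_eq0; apply: supp_vt.
Qed.

End SignPatterns.

Section Optimum.
Context {R : realType} {n : nat} {A : 'M[R]_n}.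
Hypothesis diag_ge0 : forall i, 0 <= A i i.

Lemma round_moved (s0 : 'cV[R]_n) {t : 'cV[R]_n} : in_box t -> exists v,
  [/\ in_box v, quad A t <= quad A v, moved_to_sign s0 v
    & (l0dist v s0 <= l0dist t s0)%N].
Proof.
move=> t_box; set S := enum [pred i | t i 0 != s0 i 0].
have [v [v_box le_tv v_S v_notS]] := round_coords diag_ge0 S t_box.
have supp_vt i : v i 0 != s0 i 0 -> t i 0 != s0 i 0.
  by apply: contra => /eqP t_i; rewrite v_notS ?t_i // mem_enum inE t_i eqxx.
exists v; split => //; last exact: l0dist_subset.
by move=> i /supp_vt t_i; apply: v_S; rewrite mem_enum inE.
Qed.

Lemma exists_optimal_moved (s0 : 'cV[R]_n) (k : nat) :
  in_box s0 -> exists s, optimal A s0 k s /\ moved_to_sign s0 s.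
Proof.
move=> s0_box.
pose P g := (l0dist (sign_pattern s0 g) s0 <= k)%N.
pose g0 : {ffun 'I_n -> option bool} := [ffun=> None].
have P_g0 : P g0.
  rewrite /P (_ : sign_pattern s0 g0 = s0) ?l0dist_id //.
  by apply/matrixP => i j; rewrite (ord1 j) !mxE ffunE.
case: (arg_maxP (fun g => quad A (sign_pattern s0 g)) P_g0) => g P_g g_max.
exists (sign_pattern s0 g); split; last exact: sign_pattern_moved.
split; first by split; [exact: sign_pattern_box | exact: P_g].
move=> t [t_box t_dist].
have [v [_ le_tv v_moved v_dist]] := round_moved s0 t_box.
have [g' v_g'] := moved_to_sign_pattern v_moved.
rewrite v_g' in le_tv v_dist.
by apply: le_trans le_tv (g_max g' _); apply: leq_trans v_dist t_dist.
Qed.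

End Optimum.

Theorem lemmaB1 (R : realType) (n : nat) (A : 'M[R]_n) (s0 : 'cV[R]_n) (k : nat) :
  psd A -> in_box s0 -> (0 < k)%N ->
  (exists s : 'cV[R]_n, optimal A s0 k s /\
     forall i : 'I_n, s i 0 != s0 i 0 -> s i 0 = 1 \/ s i 0 = -1) /\
  (is_sign s0 \/ k = n -> exists s : 'cV[R]_n, optimal A s0 k s /\ is_sign s).
Proof.
move=> [_ quad_ge0] s0_box _.
have diag_ge0 i : 0 <= A i i by rewrite -quad_delta.
have [s [s_opt s_moved]] := exists_optimal_moved diag_ge0 s0 k s0_box.
split; first by exists s.
case=> [s0_sign | k_n].
- exists s; split=> // i.
  by have [-> | /s_moved] := eqVneq (s i 0) (s0 i 0); first exact: s0_sign.
- have [v [v_box le_sv v_sign _]] := round_coords diag_ge0 (enum 'I_n) s_opt.1.1.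
  exists v; split; last by move=> i; apply: v_sign; rewrite mem_enum.
  split; first by split; rewrite // k_n l0dist_le_dim.
  by move=> t t_feas; apply: le_trans (s_opt.2 t t_feas) le_sv.
Qed.
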